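(* For any $\lambda,\mu\in\mathbb C\setminus\{\lambda_1,\dots,\lambda_N\}$ and any positive integers $k,l$, $$\{\operatorname{tr}L^k(\lambda),\operatorname{tr}L^l(\mu)\}=0$$ identically on the phase space.
   Context: Fix $N\ge1$, distinct nonzero real $\lambda_1,\dots,\lambda_N$. Phase space: $\mathbb C^{3N}\cong\mathbb R^{6N}$ with complex coordinates $\phi_{j\alpha}$ ($j=1,2,3$, $\alpha=1,\dots,N$) and Wirtinger derivatives $\partial/\partial\phi_{j\alpha}$, $\partial/\partial\bar\phi_{j\alpha}$. The Poisson bracket (associated with the symplectic form $\omega=\mathrm{i}\sum_{j,\alpha}d\bar\phi_{j\alpha}\wedge d\phi_{j\alpha}$) is $$\{\xi,\eta\}=-\mathrm{i}\sum_{j=1}^3\sum_{\alpha=1}^N\Big(\frac{\partial\xi}{\partial\phi_{j\alpha}}\frac{\partial\eta}{\partial\bar\phi_{j\alpha}}-\frac{\partial\xi}{\partial\bar\phi_{j\alpha}}\frac{\partial\eta}{\partial\phi_{j\alpha}}\Big).$$ With $F_\alpha=(\phi_{1\alpha},\phi_{2\alpha},\phi_{3\alpha})^T$ and $C=\operatorname{diag}(1,-1,0)$, $$L(\lambda)=C+\sum_{\alpha=1}^N\frac{1}{\lambda-\lambda_\alpha}F_\alpha F_\alpha^*,$$ a $3\times3$ matrix whose entries are functions on phase space. *)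

From HB Require Import structures.
From mathcomp Require Import all_boot all_order all_algebra.
From mathcomp Require Import all_classical all_reals.
From mathcomp Require Import topology normedtype derive.
From mathcomp Require Import complex.
Set Implicit Arguments. Unset Strict Implicit. Unset Printing Implicit Defensive.
Import Order.TTheory GRing.Theory Num.Theory.
Import numFieldNormedType.Exports.
Local Open Scope ring_scope.

Section Defs.
Variable R : realType.

Definition cplx (x : R) : R[i] := Complex x 0.
Definition iC : R[i] := Complex 0 1.
Definition reC (z : R[i]) : R := let: Complex x _ := z in x.
Definition imC (z : R[i]) : R := let: Complex _ y := z in y.

Definition phase (N : nat) := 'I_3 -> 'I_N -> R[i].

Definition rderiv0 (g : R -> R[i]) : R[i] :=
  Complex (derive1 (fun t => reC (g t)) 0) (derive1 (fun t => imC (g t)) 0).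

Definition dirD N (F : phase N -> R[i]) (phi : phase N) (v : phase N) : R[i] :=
  rderiv0 (fun t => F (fun j a => phi j a + cplx t * v j a)).

Definition ecoord N (j0 : 'I_3) (a0 : 'I_N) (c : R[i]) : phase N :=
  fun j a => if (j == j0) && (a == a0) then c else 0.

(* Wirtinger derivatives: with phi = x + i y,
   d/dphi = (d/dx - i d/dy)/2,  d/dphibar = (d/dx + i d/dy)/2 *)
Definition wirt N (F : phase N -> R[i]) (phi : phase N) j a : R[i] :=
  (dirD F phi (ecoord j a 1) - iC * dirD F phi (ecoord j a iC)) / 2%:R.
Definition wirtbar N (F : phase N -> R[i]) (phi : phase N) j a : R[i] :=
  (dirD F phi (ecoord j a 1) + iC * dirD F phi (ecoord j a iC)) / 2%:R.

Definition pbracket N (xi eta : phase N -> R[i]) (phi : phase N) : R[i] :=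
  - iC * \sum_(j < 3) \sum_(a < N)
      (wirt xi phi j a * wirtbar eta phi j a - wirtbar xi phi j a * wirt eta phi j a).

Definition Cmat : 'M[R[i]]_3 :=
  \matrix_(i < 3, j < 3) (if i == j then
       (if val i == 0%N then 1 else if val i == 1%N then -1 else 0) else 0).

Definition Lax N (lams : 'I_N -> R) (lam : R[i]) (phi : phase N) : 'M[R[i]]_3 :=
  Cmat + \matrix_(i < 3, j < 3)
     \sum_(a < N) phi i a * (phi j a)^* / (lam - cplx (lams a)).

End Defs.

From HB Require Import structures.
From mathcomp Require Import all_boot all_order all_algebra.
From mathcomp Require Import all_classical all_reals.
From mathcomp Require Import complex.
From mathcomp Require Import topology normedtype derive.
From mathcomp Require Import ring.
Set Implicit Arguments. Unset Strict Implicit. Unset Printing Implicit Defensive.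
Import Order.TTheory GRing.Theory Num.Theory.
Import numFieldNormedType.Exports.
Local Open Scope ring_scope.

(* Write L = Cmat + sum_a w_a F_a F_a^* with w_a = 1/(lam - lam_a).  Moving phi along a
   real direction v makes L(phi + t v) a quadratic matrix polynomial in t, so the
   derivative of tr L^k is k tr(dL L^(k-1)); along the coordinate directions this
   gives the Wirtinger derivatives k w_a (F_a^* X)_j and k w_a (X F_a)_j, with
   X = L(lam)^(k-1).  Hence, with Y = L(mu)^(l-1), the bracket is
   -i k l sum_a w_a(lam) w_a(mu) F_a^* [X, Y] F_a.  For lam <> mu partial fractions
   turn the weights w_a(lam) w_a(mu) into (w_a(mu) - w_a(lam)) / (lam - mu), so the
   bracket is proportional to tr ((L(mu) - L(lam)) [X, Y]), and each trace vanishes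
   because L(mu) commutes with Y and L(lam) with X; for lam = mu, X and Y commute. *)

Section RealDerivative.
Variable R : realType.

Lemma reC_horner (q : {poly R[i]}) (t : R) :
  reC q.[cplx t] = (\poly_(i < size q) reC q`_i).[t].
Proof.
rewrite horner_coef [RHS](@horner_coef_wide _ (size q)) ?size_poly //.
have -> : @reC R = @complex.Re R by apply/funext; case.
rewrite raddf_sum; apply: eq_bigr => i _.
have -> : cplx t ^+ i = real_complex R (t ^+ i) by rewrite rmorphXn.
by rewrite coef_poly ltn_ord; case: (q`_i) => x y /=; rewrite mulr0 subr0.
Qed.

Lemma imC_horner (q : {poly R[i]}) (t : R) :
  imC q.[cplx t] = (\poly_(i < size q) imC q`_i).[t].
Proof.
rewrite horner_coef [RHS](@horner_coef_wide _ (size q)) ?size_poly //.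
have -> : @imC R = @complex.Im R by apply/funext; case.
rewrite raddf_sum; apply: eq_bigr => i _.
have -> : cplx t ^+ i = real_complex R (t ^+ i) by rewrite rmorphXn.
by rewrite coef_poly ltn_ord; case: (q`_i) => x y /=; rewrite mulr0 add0r.
Qed.

Lemma derive1_horner0 (p : {poly R}) : derive1 (horner p) 0 = p`_1.
Proof. by rewrite -derivE horner_coef0 coef_deriv mulr1n. Qed.

Lemma rderiv0_horner (q : {poly R[i]}) : rderiv0 (fun t => q.[cplx t]) = q`_1.
Proof.
rewrite /rderiv0 (funext (reC_horner q)) (funext (imC_horner q)) !derive1_horner0.
rewrite !coef_poly; case: ltnP => [_|q_small]; first by case: q`_1.
by rewrite nth_default.
Qed.

End RealDerivative.

Section MatrixPolyCoef.
Variables (K : comNzRingType) (n : nat).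
Local Notation mxcoef i P := (map_mx (coefp i) P).

Lemma coef1M (p q : {poly K}) : (p * q)`_1 = p`_0 * q`_1 + p`_1 * q`_0.
Proof. by rewrite coefM !big_ord_recr big_ord0 /= add0r. Qed.

Lemma mxcoef0M (P Q : 'M[{poly K}]_n.+1) : mxcoef 0 (P *m Q) = mxcoef 0 P *m mxcoef 0 Q.
Proof.
apply/matrixP => i j; rewrite !mxE /= coef_sum.
by apply: eq_bigr => l _; rewrite !mxE coefM big_ord1.
Qed.

Lemma mxcoef1M (P Q : 'M[{poly K}]_n.+1) :
  mxcoef 1 (P *m Q) = mxcoef 0 P *m mxcoef 1 Q + mxcoef 1 P *m mxcoef 0 Q.
Proof.
apply/matrixP => i j; rewrite !mxE /= coef_sum -big_split /=.
by apply: eq_bigr => l _; rewrite !mxE coef1M.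
Qed.

Lemma mxcoef0X (P : 'M[{poly K}]_n.+1) k : mxcoef 0 (P ^+ k) = mxcoef 0 P ^+ k.
Proof.
elim: k => [|k IHk]; last by rewrite !exprSr -!mulmxE mxcoef0M IHk.
by apply/matrixP => i j; rewrite !mxE /= coefMn coef1 mulr1n; case: (i == j).
Qed.

Lemma mxcoef1_1 : mxcoef 1 (1 : 'M[{poly K}]_n.+1) = 0.
Proof. by apply/matrixP => i j; rewrite !mxE /= coefMn coef1 mul0rn. Qed.

Lemma mxtrace_mxcoef1X (P : 'M[{poly K}]_n.+1) k m :
  \tr (mxcoef 1 (P ^+ k) *m mxcoef 0 P ^+ m) =
  k%:R * \tr (mxcoef 1 P *m mxcoef 0 P ^+ (k.-1 + m)).
Proof.
elim: k m => [|k IHk] m; first by rewrite expr0 mxcoef1_1 mul0mx mxtrace0 mul0r.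
rewrite exprSr -mulmxE mxcoef1M mxcoef0X mulmxDl mxtraceD -mulmxA mxtrace_mulC.
rewrite -!mulmxA !mulmxE -exprD -exprS IHk mulrSr mulrDl mul1r addrC -!mulmxE /=.
rewrite (addnC m k); congr (_ + _); case: k {IHk} => [|k]; rewrite ?mul0r //=.
by rewrite addnS.
Qed.

Lemma coef_mxtrace (P : 'M[{poly K}]_n.+1) i : (\tr P)`_i = \tr (mxcoef i P).
Proof. by rewrite /mxtrace coef_sum; apply: eq_bigr => j _; rewrite mxE. Qed.

End MatrixPolyCoef.

Lemma rderiv0_mxtrace_pow (R : realType) n (A0 A1 A2 : 'M[R[i]]_n.+1) k :
  rderiv0 (fun t => \tr ((A0 + cplx t *: A1 + cplx t ^+ 2 *: A2) ^+ k)) =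
  k%:R * \tr (A1 *m A0 ^+ k.-1).
Proof.
pose P := map_mx polyC A0 + 'X *: map_mx polyC A1 + 'X^2 *: map_mx polyC A2.
have evalP t : map_mx (horner_eval (cplx t)) P = A0 + cplx t *: A1 + cplx t ^+ 2 *: A2.
  by apply/matrixP => i j; rewrite !mxE /horner_eval !hornerE.
have coefP i j : (P i j)`_0 = A0 i j /\ (P i j)`_1 = A1 i j.
  by rewrite !mxE !coefD !coefC !coefXM !coefXnM !coefC /= !addr0 !add0r.
have mxcoefP : map_mx (coefp 0) P = A0 /\ map_mx (coefp 1) P = A1.
  by split; apply/matrixP => i j; rewrite mxE; case: (coefP i j).
under eq_fun => t do rewrite -evalP -rmorphXn /= trace_map_mx.
rewrite rderiv0_horner coef_mxtrace.
have := mxtrace_mxcoef1X P k 0; rewrite expr0 mulmx1 addn0 => ->.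
by case: mxcoefP => -> ->.
Qed.

Section LaxMatrix.
Variables (R : realType) (N : nat) (lams : 'I_N -> R).
Implicit Types (phi psi v : phase R N) (w : 'I_N -> R[i]).

Definition Fcol phi a : 'cV[R[i]]_3 := \col_i phi i a.
Definition Fadj phi a : 'rV[R[i]]_3 := \row_j (phi j a)^*.

Definition gram w phi psi : 'M[R[i]]_3 := \sum_(a < N) w a *: (Fcol phi a *m Fadj psi a).

Definition pole (lam : R[i]) a : R[i] := (lam - cplx (lams a))^-1.

Lemma gramE w phi psi i j :
  gram w phi psi i j = \sum_(a < N) w a * (phi i a * (psi j a)^*).
Proof.
rewrite /gram summxE; apply: eq_bigr => a _.
by rewrite !mxE big_ord1 !mxE.
Qed.

Lemma LaxE lam phi : Lax lams lam phi = Cmat R + gram (pole lam) phi phi.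
Proof.
congr (_ + _); apply/matrixP => i j; rewrite gramE mxE.
by apply: eq_bigr => a _; rewrite mulrC.
Qed.

Lemma Lax_shift lam phi v (t : R) :
  Lax lams lam (fun j a => phi j a + cplx t * v j a) =
  Lax lams lam phi + cplx t *: (gram (pole lam) phi v + gram (pole lam) v phi)
  + cplx t ^+ 2 *: gram (pole lam) v v.
Proof.
rewrite !LaxE -!addrA; congr (_ + _); apply/matrixP => i j.
rewrite !mxE !gramE -big_split !big_distrr -!big_split /=; apply: eq_bigr => a _.
have conj_t : (cplx t)^* = cplx t := conjc_real t.
by rewrite rmorphD rmorphM /= conj_t; ring.
Qed.

Lemma dirD_trLax lam phi v k :
  dirD (fun p => \tr (Lax lams lam p ^+ k)) phi v =
  k%:R * \tr ((gram (pole lam) phi v + gram (pole lam) v phi) *m Lax lams lam phi ^+ k.-1).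
Proof.
rewrite /dirD; under eq_fun => t do rewrite Lax_shift.
exact: rderiv0_mxtrace_pow.
Qed.

Lemma mxtrace_gram_mul w phi psi X :
  \tr (gram w phi psi *m X) = \sum_(a < N) w a * (Fadj psi a *m X *m Fcol phi a) 0 0.
Proof.
rewrite /gram mulmx_suml raddf_sum; apply: eq_bigr => a _.
by rewrite -scalemxAl /= mxtraceZ -mulmxA mxtrace_mulC trace_mx11.
Qed.

End LaxMatrix.

Section Wirtinger.
Variables (R : realType) (N : nat) (lams : 'I_N -> R).
Implicit Types (phi : phase R N) (w : 'I_N -> R[i]).

Lemma iC_mulii : iC R * iC R = -1.
Proof. by rewrite /iC; simpc. Qed.

Lemma conj_iC : (iC R)^* = - iC R.
Proof. by rewrite /iC; simpc. Qed.

Lemma Fcol_ecoord (j0 : 'I_3) (a0 a : 'I_N) (c : R[i]) :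
  Fcol (ecoord j0 a0 c) a = if a == a0 then c *: (delta_mx j0 0 : 'cV_3) else 0.
Proof.
apply/matrixP => i z; rewrite ord1 /ecoord !mxE.
case: (a == a0); rewrite ?andbT ?andbF !mxE ?eqxx ?andbT //.
by case: (i == j0); rewrite ?mulr1 ?mulr0.
Qed.

Lemma Fadj_ecoord (j0 : 'I_3) (a0 a : 'I_N) (c : R[i]) :
  Fadj (ecoord j0 a0 c) a = if a == a0 then c^* *: (delta_mx 0 j0 : 'rV_3) else 0.
Proof.
apply/matrixP => z j; rewrite ord1 /ecoord !mxE.
case: (a == a0); rewrite ?andbT ?andbF !mxE ?eqxx ?rmorph0 //.
by case: (j == j0); rewrite ?mulr1 ?mulr0 ?rmorph0.
Qed.

Lemma mxtrace_gram_ecoord w phi (j0 : 'I_3) (a0 : 'I_N) (c : R[i]) (X : 'M_3) :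
  \tr ((gram w phi (ecoord j0 a0 c) + gram w (ecoord j0 a0 c) phi) *m X) =
  w a0 * (c^* * (X *m Fcol phi a0) j0 0 + c * (Fadj phi a0 *m X) 0 j0).
Proof.
rewrite mulmxDl mxtraceD !mxtrace_gram_mul !(big_only1 a0) //;
  try by move=> a /negbTE ne _; rewrite ?Fcol_ecoord ?Fadj_ecoord ne ?mulmx0 ?mul0mx mxE mulr0.
rewrite Fadj_ecoord Fcol_ecoord eqxx -!scalemxAl -mulmxA -rowE -scalemxAr -colE.
by rewrite !mxE mulrDr.
Qed.

Lemma dirD_trLax_ecoord lam phi k j a c :
  dirD (fun p => \tr (Lax lams lam p ^+ k)) phi (ecoord j a c) =
  k%:R * pole lams lam a * (c^* * (Lax lams lam phi ^+ k.-1 *m Fcol phi a) j 0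
                             + c * (Fadj phi a *m Lax lams lam phi ^+ k.-1) 0 j).
Proof. by rewrite dirD_trLax mxtrace_gram_ecoord mulrA. Qed.

Lemma wirt_trLax lam phi k j a :
  wirt (fun p => \tr (Lax lams lam p ^+ k)) phi j a =
  k%:R * pole lams lam a * (Fadj phi a *m Lax lams lam phi ^+ k.-1) 0 j.
Proof.
rewrite /wirt !dirD_trLax_ecoord rmorph1 conj_iC.
set K := _ * pole _ _ _; set S := (Fadj _ _ *m _) 0 j; set T := (_ *m Fcol _ _) j 0.
have -> : K * (1 * T + 1 * S) - iC R * (K * (- iC R * T + iC R * S)) =
          K * ((1 + iC R * iC R) * T + (1 - iC R * iC R) * S) by ring.
by rewrite iC_mulii; field.
Qed.

Lemma wirtbar_trLax lam phi k j a :
  wirtbar (fun p => \tr (Lax lams lam p ^+ k)) phi j a =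
  k%:R * pole lams lam a * (Lax lams lam phi ^+ k.-1 *m Fcol phi a) j 0.
Proof.
rewrite /wirtbar !dirD_trLax_ecoord rmorph1 conj_iC.
set K := _ * pole _ _ _; set S := (Fadj _ _ *m _) 0 j; set T := (_ *m Fcol _ _) j 0.
have -> : K * (1 * T + 1 * S) + iC R * (K * (- iC R * T + iC R * S)) =
          K * ((1 - iC R * iC R) * T + (1 + iC R * iC R) * S) by ring.
by rewrite iC_mulii; field.
Qed.

End Wirtinger.

Lemma mxtrace_mul_commutatorr (K : comPzRingType) n (M X Y : 'M[K]_n) :
  M *m Y = Y *m M -> \tr (M *m (X *m Y - Y *m X)) = 0.
Proof.
move=> MY; rewrite mulmxBr linearB /= mulmxA mxtrace_mulC mulmxA -MY -mulmxA.
by rewrite mxtrace_mulC subrr.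
Qed.

Lemma mxtrace_mul_commutatorl (K : comPzRingType) n (M X Y : 'M[K]_n) :
  M *m X = X *m M -> \tr (M *m (X *m Y - Y *m X)) = 0.
Proof.
by move=> MX; rewrite -opprB mulmxN linearN /= mxtrace_mul_commutatorr ?oppr0.
Qed.

Section Bracket.
Variables (R : realType) (N : nat) (lams : 'I_N -> R).

Lemma gram_pole_mul lam mu (phi : phase R N) :
  (forall a, lam != cplx (lams a)) -> (forall a, mu != cplx (lams a)) -> lam != mu ->
  gram (fun a => pole lams lam a * pole lams mu a) phi phi =
  (lam - mu)^-1 *: (Lax lams mu phi - Lax lams lam phi).
Proof.
move=> lam_pole mu_pole lam_neq_mu; rewrite !LaxE opprD addrACA subrr add0r.
apply/matrixP => i j; rewrite !mxE !gramE -sumrB mulr_sumr; apply: eq_bigr => a _.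
have lam_a : lam - cplx (lams a) != 0 by rewrite subr_eq0.
have mu_a : mu - cplx (lams a) != 0 by rewrite subr_eq0.
by rewrite /pole; field; rewrite lam_a mu_a subr_eq0 lam_neq_mu.
Qed.

Lemma pbracket_trLax lam mu k l (phi : phase R N) :
  pbracket (fun p => \tr (Lax lams lam p ^+ k)) (fun p => \tr (Lax lams mu p ^+ l)) phi =
  - iC R * (k%:R * l%:R) *
    \tr (gram (fun a => pole lams lam a * pole lams mu a) phi phi *m
         (Lax lams lam phi ^+ k.-1 *m Lax lams mu phi ^+ l.-1
          - Lax lams mu phi ^+ l.-1 *m Lax lams lam phi ^+ k.-1)).
Proof.
rewrite /pbracket -[RHS]mulrA; congr (_ * _).
rewrite mxtrace_gram_mul mulr_sumr exchange_big /=.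
apply: eq_bigr => a _.
under eq_bigr => j _ do rewrite wirt_trLax wirtbar_trLax wirt_trLax wirtbar_trLax.
have quad_mul X Y : (Fadj phi a *m (X *m Y) *m Fcol phi a) 0 0 =
    \sum_j (Fadj phi a *m X) 0 j * (Y *m Fcol phi a) j 0.
  by rewrite -!mulmxA mulmxA mxE.
have entryB (A B : 'M[R[i]]_1) : (A - B) 0 0 = A 0 0 - B 0 0 by rewrite !mxE.
rewrite mulmxBr mulmxBl entryB !quad_mul -sumrB !mulr_sumr.
by apply: eq_bigr => j _; ring.
Qed.

End Bracket.

Theorem lemma3 (R : realType) (N : nat) (lams : 'I_N -> R)
  (hN : (0 < N)%N) (hinj : injective lams) (hnz : forall a, lams a != 0)
  (lam mu : R[i])
  (hlam : forall a, lam != cplx (lams a)) (hmu : forall a, mu != cplx (lams a))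
  (k l : nat) (hk : (0 < k)%N) (hl : (0 < l)%N) (phi : phase R N) :
  pbracket (fun p => \tr (Lax lams lam p ^+ k)) (fun p => \tr (Lax lams mu p ^+ l)) phi = 0.
Proof.
rewrite pbracket_trLax.
have [<-|lam_neq_mu] := eqVneq lam mu.
  by rewrite !mulmxE -!exprD addnC subrr mulr0 mxtrace0 mulr0.
rewrite gram_pole_mul // -scalemxAl mxtraceZ mulmxBl linearB /=.
rewrite mxtrace_mul_commutatorr; last by rewrite !mulmxE -exprS exprSr.
rewrite mxtrace_mul_commutatorl; last by rewrite !mulmxE -exprS exprSr.
by rewrite subrr !mulr0.
Qed.
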